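(* Let $K$ be a compact Hausdorff space. Then $n_L(C(K))=1$, in both the real and the complex case.
   Context: $C(K)$ is the Banach space of continuous scalar-valued functions on $K$ with the supremum norm. For a Banach space $X$: $\mathrm{Lip}_0(X)$ is the set of Lipschitz maps $T:X\to X$ with $T(0)=0$, with $\|T\|_L=\sup\{\|Tx-Ty\|/\|x-y\|: x\neq y\}$; $D(x)=\{x^*\in X^*: x^*(x)=\|x^*\|\|x\|=\|x\|^2\}$; $\omega(T)=\sup\{|f(Tx-Ty)|/\|x-y\|^2: x\neq y,\ f\in D(x-y)\}$; $n_L(X)=\inf\{\omega(T): T\in\mathrm{Lip}_0(X),\ \|T\|_L=1\}$. *)

From Stdlib Require Import Reals Lra List ClassicalEpsilon.
Open Scope R_scope.

(** * Extended reals, suprema and infima (always exist in [-oo,+oo]) *)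
Inductive Rbar : Type := Fin (r : R) | PInf | MInf.

Definition Rbar_le (x y : Rbar) : Prop :=
  match x, y with
  | MInf, _ => True
  | _, PInf => True
  | Fin a, Fin b => a <= b
  | _, _ => False
  end.

Definition Rbar_is_sup (S : Rbar -> Prop) (l : Rbar) : Prop :=
  (forall x, S x -> Rbar_le x l) /\
  (forall u, (forall x, S x -> Rbar_le x u) -> Rbar_le l u).

Definition Rbar_is_inf (S : Rbar -> Prop) (l : Rbar) : Prop :=
  (forall x, S x -> Rbar_le l x) /\
  (forall u, (forall x, S x -> Rbar_le u x) -> Rbar_le u l).

Definition Sup (S : Rbar -> Prop) : Rbar :=
  epsilon (inhabits PInf) (Rbar_is_sup S).
Definition Inf (S : Rbar -> Prop) : Rbar :=
  epsilon (inhabits PInf) (Rbar_is_inf S).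

Definition RSup (S : R -> Prop) : Rbar := Sup (fun x => exists r, x = Fin r /\ S r).

Definition real_of (x : Rbar) : R := match x with Fin r => r | _ => 0 end.

Record Cplx : Type := mkC { Re : R; Im : R }.
Definition Cadd (z w : Cplx) := mkC (Re z + Re w) (Im z + Im w).
Definition Copp (z : Cplx) := mkC (- Re z) (- Im z).
Definition Cmul (z w : Cplx) :=
  mkC (Re z * Re w - Im z * Im w) (Re z * Im w + Im z * Re w).
Definition Cabs (z : Cplx) := sqrt (Re z ^ 2 + Im z ^ 2).
Definition CofR (r : R) := mkC r 0.

Inductive field_kind : Type := RealCase | ComplexCase.

Definition scal (k : field_kind) : Type :=
  match k with RealCase => R | ComplexCase => Cplx end.

Definition sadd (k : field_kind) : scal k -> scal k -> scal k :=
  match k with RealCase => Rplus | ComplexCase => Cadd end.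
Definition sopp (k : field_kind) : scal k -> scal k :=
  match k with RealCase => Ropp | ComplexCase => Copp end.
Definition smul (k : field_kind) : scal k -> scal k -> scal k :=
  match k with RealCase => Rmult | ComplexCase => Cmul end.
Definition sabs (k : field_kind) : scal k -> R :=
  match k with RealCase => Rabs | ComplexCase => Cabs end.
Definition sofR (k : field_kind) : R -> scal k :=
  match k with RealCase => fun r => r | ComplexCase => CofR end.

Definition is_topology {K : Type} (opens : (K -> Prop) -> Prop) : Prop :=
  opens (fun _ => True) /\
  (forall U V, opens U -> opens V -> opens (fun x => U x /\ V x)) /\
  (forall F : (K -> Prop) -> Prop, (forall U, F U -> opens U) ->
     opens (fun x => exists U, F U /\ U x)).

Definition is_compact {K : Type} (opens : (K -> Prop) -> Prop) : Prop :=
  forall F : (K -> Prop) -> Prop,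
    (forall U, F U -> opens U) ->
    (forall x, exists U, F U /\ U x) ->
    exists l : list (K -> Prop),
      (forall U, In U l -> F U) /\ (forall x, exists U, In U l /\ U x).

Definition is_hausdorff {K : Type} (opens : (K -> Prop) -> Prop) : Prop :=
  forall x y : K, x <> y ->
    exists U V, opens U /\ opens V /\ U x /\ V y /\ (forall z, ~ (U z /\ V z)).

Section CK.
Variable k : field_kind.
Variable K : Type.
Variable opens : (K -> Prop) -> Prop.

Definition fn := K -> scal k.

Definition continuous (f : fn) : Prop :=
  forall x eps, 0 < eps ->
    exists U, opens U /\ U x /\
      forall y, U y -> sabs k (sadd k (f y) (sopp k (f x))) < eps.

Definition inCK (f : fn) : Prop := continuous f.

Definition fzero : fn := fun _ => sofR k 0.
Definition fadd (f g : fn) : fn := fun t => sadd k (f t) (g t).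
Definition fsub (f g : fn) : fn := fun t => sadd k (f t) (sopp k (g t)).
Definition fscale (a : scal k) (f : fn) : fn := fun t => smul k a (f t).

Definition norm (f : fn) : R := real_of (RSup (fun r => exists t, r = sabs k (f t))).

Definition in_dual (phi : fn -> scal k) : Prop :=
  (forall f g, inCK f -> inCK g -> phi (fadd f g) = sadd k (phi f) (phi g)) /\
  (forall a f, inCK f -> phi (fscale a f) = smul k a (phi f)) /\
  (exists M, forall f, inCK f -> sabs k (phi f) <= M * norm f).

Definition dual_norm (phi : fn -> scal k) : R :=
  real_of (RSup (fun r => exists f, inCK f /\ norm f <= 1 /\ r = sabs k (phi f))).

Definition Dset (x : fn) (phi : fn -> scal k) : Prop :=
  in_dual phi /\
  phi x = sofR k (dual_norm phi * norm x) /\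
  dual_norm phi * norm x = norm x ^ 2.

Definition in_Lip0 (T : fn -> fn) : Prop :=
  (forall f, inCK f -> inCK (T f)) /\
  T fzero = fzero /\
  (exists L, forall x y, inCK x -> inCK y -> norm (fsub (T x) (T y)) <= L * norm (fsub x y)).

Definition lip_norm (T : fn -> fn) : Rbar :=
  RSup (fun r => exists x y, inCK x /\ inCK y /\ x <> y /\
          r = norm (fsub (T x) (T y)) / norm (fsub x y)).

Definition omega (T : fn -> fn) : Rbar :=
  RSup (fun r => exists x y phi, inCK x /\ inCK y /\ x <> y /\ Dset (fsub x y) phi /\
          r = sabs k (phi (fsub (T x) (T y))) / norm (fsub x y) ^ 2).

Definition nL : Rbar :=
  Inf (fun w => exists T, in_Lip0 T /\ lip_norm T = Fin 1 /\ w = omega T).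

End CK.

(* Upper bound: the identity has ||Id||_L = 1, and phi(z) = ||z||^2 for every phi in
   D(z), so omega(Id) = 1.  Lower bound: fix T in Lip_0(C(K)) with ||T||_L = 1 and
   0 <= th < 1.  We find u, v and a point t1 at which u - v attains its norm while
   |(Tu - Tv)(t1)| > th ||u - v||; then the functional conj((u - v)(t1)) * delta_t1
   lies in D(u - v) and shows omega(T) > th.  To find (u, v, t1), start from x, y
   almost attaining ||T||_L and a point t0 almost attaining ||Tx - Ty||.  If
   (x - y)(t0) <> 0, a radial rescaling splits x - y into two continuous functions,
   both peaking at t0, whose norms add up to ||x - y|| (peak_split); by the triangle
   inequality at t0 one of the two resulting pairs works (peak_transfer).  If
   (x - y)(t0) = 0, x is first shifted by a small constant (shift_by_constant). *)

From Stdlib Require Import Reals Lra Psatz List.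
From Stdlib Require Import ClassicalEpsilon Classical FunctionalExtensionality.
Open Scope R_scope.

(** ** Suprema and infima in the extended reals *)

Lemma Rbar_le_antisym (a b : Rbar) : Rbar_le a b -> Rbar_le b a -> a = b.
Proof. destruct a, b; simpl; intros; try tauto. f_equal; lra. Qed.

Lemma RSup_exists (S : R -> Prop) :
  exists l, Rbar_is_sup (fun x => exists r, x = Fin r /\ S r) l.
Proof.
  destruct (classic (exists r, S r)) as [[r0 Hr0] | Hempty].
  - destruct (classic (exists B, forall r, S r -> r <= B)) as [[B HB] | Hunb].
    + destruct (completeness S (ex_intro _ B HB) (ex_intro _ r0 Hr0)) as [m [Hub Hleast]].
      exists (Fin m); split.
      * intros x [r [-> Hr]]. exact (Hub r Hr).
      * intros [u | |] Hu; simpl; auto.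
        -- apply Hleast. intros r Hr. exact (Hu (Fin r) (ex_intro _ r (conj eq_refl Hr))).
        -- exact (Hu (Fin r0) (ex_intro _ r0 (conj eq_refl Hr0))).
    + exists PInf; split.
      * intros [] _; simpl; auto.
      * intros [u | |] Hu; simpl; auto.
        -- apply Hunb. exists u. intros r Hr.
           exact (Hu (Fin r) (ex_intro _ r (conj eq_refl Hr))).
        -- exact (Hu (Fin r0) (ex_intro _ r0 (conj eq_refl Hr0))).
  - exists MInf; split.
    + intros x [r [_ Hr]]. exfalso. eauto.
    + intros u _. exact I.
Qed.

Lemma RSup_spec (S : R -> Prop) :
  Rbar_is_sup (fun x => exists r, x = Fin r /\ S r) (RSup S).
Proof. exact (epsilon_spec _ _ (RSup_exists S)). Qed.

Lemma RSup_Fin (S : R -> Prop) m : RSup S = Fin m ->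
  (forall r, S r -> r <= m) /\ (forall u, (forall r, S r -> r <= u) -> m <= u).
Proof.
  intros E. destruct (RSup_spec S) as [Hub Hleast]. rewrite E in Hub, Hleast. split.
  - intros r Hr. exact (Hub (Fin r) (ex_intro _ r (conj eq_refl Hr))).
  - intros u Hu. apply (Hleast (Fin u)). intros x [r [-> Hr]]. exact (Hu r Hr).
Qed.

Lemma RSup_finite (S : R -> Prop) r0 B :
  S r0 -> (forall r, S r -> r <= B) -> exists m, RSup S = Fin m.
Proof.
  intros H0 HB. destruct (RSup_spec S) as [Hub Hleast].
  destruct (RSup S) as [m | |]; [eauto | exfalso | exfalso].
  - apply (Hleast (Fin B)). intros x [r [-> Hr]]. exact (HB r Hr).
  - exact (Hub (Fin r0) (ex_intro _ r0 (conj eq_refl H0))).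
Qed.

Lemma RSup_max (S : R -> Prop) r0 : S r0 -> (forall r, S r -> r <= r0) -> RSup S = Fin r0.
Proof.
  intros H0 HB. destruct (RSup_finite S r0 r0 H0 HB) as [m E]. rewrite E.
  destruct (RSup_Fin S m E) as [Hub Hleast]. f_equal. apply Rle_antisym; auto.
Qed.

Lemma RSup_approx (S : R -> Prop) m th :
  RSup S = Fin m -> th < m -> exists r, S r /\ th < r.
Proof.
  intros E Hth. apply NNPP. intros Hnone.
  assert (m <= th); [|lra].
  apply (proj2 (RSup_Fin S m E)). intros r Hr.
  apply Rnot_lt_le. intros Hlt. apply Hnone. eauto.
Qed.

Lemma RSup_le (S : R -> Prop) u : (forall r, S r -> r <= u) -> Rbar_le (RSup S) (Fin u).
Proof. intros Hu. apply (proj2 (RSup_spec S)). intros x [r [-> Hr]]. exact (Hu r Hr). Qed.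

Lemma RSup_ge (S : R -> Prop) c :
  (forall th, th < c -> exists r, S r /\ th < r) -> Rbar_le (Fin c) (RSup S).
Proof.
  intros Hclose. destruct (RSup_spec S) as [Hub _].
  destruct (RSup S) as [m | |]; simpl; auto.
  - apply Rnot_lt_le. intros Hm. destruct (Hclose m Hm) as [r [Hr Hmr]].
    assert (Hrm := Hub (Fin r) (ex_intro _ r (conj eq_refl Hr))). simpl in Hrm. lra.
  - destruct (Hclose (c - 1)) as [r [Hr _]]; [lra|].
    exact (Hub (Fin r) (ex_intro _ r (conj eq_refl Hr))).
Qed.

Lemma Inf_eq (S : Rbar -> Prop) l : Rbar_is_inf S l -> Inf S = l.
Proof.
  intros Hl. unfold Inf.
  destruct (epsilon_spec (inhabits PInf) (Rbar_is_inf S) (ex_intro _ l Hl)) as [Hlow Hgreat].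
  destruct Hl as [Hlow' Hgreat']. apply Rbar_le_antisym; auto.
Qed.

(** ** Real estimates for the radial rescaling [w |-> b / max(|w|, g) * w] *)

Lemma Rmax_sub_le A A' g : Rabs (Rmax A g - Rmax A' g) <= Rabs (A - A').
Proof.
  unfold Rmax; destruct (Rle_dec A g), (Rle_dec A' g); apply Rabs_le;
    pose proof (Rle_abs (A - A')); pose proof (Rle_abs (- (A - A')));
    rewrite Rabs_Ropp in *; lra.
Qed.

Lemma Rdiv_nonneg a b : 0 <= a -> 0 < b -> 0 <= a / b.
Proof.
  intros Ha Hb. unfold Rdiv.
  apply Rmult_le_pos; [exact Ha | left; apply Rinv_0_lt_compat, Hb].
Qed.

Lemma radial_factor_bounds g M A : 0 < g <= M -> 0 <= A <= M ->
  Rabs ((M + g) / 2 / Rmax A g) * A <= (M + g) / 2 /\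
  Rabs (1 - (M + g) / 2 / Rmax A g) * A <= (M - g) / 2.
Proof.
  intros Hg HA. unfold Rmax; destruct (Rle_dec A g) as [HAg | HAg].
  - set (c := (M + g) / 2 / g).
    assert (Hcg : c * g = (M + g) / 2) by (unfold c; field; lra).
    assert (Hc : 1 <= c) by nra.
    rewrite (Rabs_right c), (Rabs_left1 (1 - c)) by lra. split; nra.
  - rewrite Rabs_right by (apply Rle_ge, Rdiv_nonneg; lra). split; [right; field; lra|].
    replace (1 - (M + g) / 2 / A) with ((A - (M + g) / 2) * / A) by (field; lra).
    rewrite Rabs_mult, Rabs_inv, (Rabs_right A) by lra.
    replace (Rabs (A - (M + g) / 2) * / A * A) with (Rabs (A - (M + g) / 2)) by (field; lra).
    apply Rabs_le. lra.
Qed.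

Lemma radial_factor_at_peak g M : 0 < g <= M ->
  Rabs ((M + g) / 2 / Rmax g g) * g = (M + g) / 2 /\
  Rabs (1 - (M + g) / 2 / Rmax g g) * g = (M - g) / 2.
Proof.
  intros Hg. rewrite Rmax_left by lra. set (c := (M + g) / 2 / g).
  assert (Hcg : c * g = (M + g) / 2) by (unfold c; field; lra).
  assert (Hc : 1 <= c) by nra.
  rewrite (Rabs_right c), (Rabs_left1 (1 - c)) by lra. split; nra.
Qed.

(* The Lipschitz estimate behind [|c w - c' w'| <= (2b/g) |w - w'|]. *)
Lemma radial_factor_lipschitz b g A A' D : 0 <= b -> 0 < g -> 0 <= A -> 0 <= A' ->
  Rabs (A - A') <= D ->
  Rabs (b / Rmax A g) * D + Rabs (b / Rmax A g - b / Rmax A' g) * A' <= 2 * b / g * D.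
Proof.
  intros Hb Hg HA HA' HD.
  set (m := Rmax A g). set (m' := Rmax A' g).
  assert (Hm : g <= m) by apply Rmax_r. assert (Hm' : g <= m') by apply Rmax_r.
  assert (HAm' : A' <= m') by apply Rmax_l.
  assert (Hmm : Rabs (m' - m) <= D).
  { rewrite Rabs_minus_sym. eapply Rle_trans; [apply Rmax_sub_le | exact HD]. }
  assert (HD0 : 0 <= D) by (eapply Rle_trans; [apply Rabs_pos | exact HD]).
  assert (Hfirst : Rabs (b / m) * D <= b / g * D).
  { rewrite Rabs_right by (apply Rle_ge, Rdiv_nonneg; lra).
    apply Rmult_le_compat_r; [exact HD0|]. unfold Rdiv. apply Rmult_le_compat_l; [exact Hb|].
    apply Rinv_le_contravar; lra. }
  assert (Hsecond : Rabs (b / m - b / m') * A' <= b / g * D).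
  { replace (b / m - b / m') with (b * (m' - m) / (m * m')) by (field; lra).
    unfold Rdiv. rewrite !Rabs_mult, Rabs_inv, (Rabs_right b), (Rabs_right (m * m')) by nra.
    apply Rle_trans with (b * D * / (m * m') * m').
    - assert (Hinv : 0 < / (m * m')) by (apply Rinv_0_lt_compat; nra).
      pose proof (Rabs_pos (m' - m)).
      apply Rmult_le_compat; [| lra | | exact HAm'].
      + apply Rmult_le_pos; [apply Rmult_le_pos|]; lra.
      + apply Rmult_le_compat_r; [lra|]. apply Rmult_le_compat_l; lra.
    - replace (b * D * / (m * m') * m') with (b * / m * D) by (field; lra).
      apply Rmult_le_compat_r; [exact HD0|]. apply Rmult_le_compat_l; [exact Hb|].
      apply Rinv_le_contravar; lra. }
  replace (2 * b / g * D) with (b / g * D + b / g * D) by (field; lra). lra.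
Qed.

(** ** The scalar field *)

Notation ssub k a b := (sadd k a (sopp k b)).

Section Field.
Variable k : field_kind.

Lemma scal_ring : ring_theory (sofR k 0) (sofR k 1) (sadd k) (smul k)
  (fun a b => ssub k a b) (sopp k) (@eq (scal k)).
Proof.
  destruct k; constructor; simpl; intros; try ring;
    repeat match goal with z : Cplx |- _ => destruct z end;
    unfold Cadd, Copp, Cmul, CofR; simpl; f_equal; ring.
Qed.
Add Ring scal_ring_k : scal_ring.

Lemma sofR_sub r s : sofR k (r - s) = ssub k (sofR k r) (sofR k s).
Proof. destruct k; simpl; [ring | unfold CofR, Cadd, Copp; simpl; f_equal; ring]. Qed.

Lemma sabs_nonneg (a : scal k) : 0 <= sabs k a.
Proof. destruct k; simpl. apply Rabs_pos. apply sqrt_pos. Qed.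

Lemma sabs_mul (a b : scal k) : sabs k (smul k a b) = sabs k a * sabs k b.
Proof.
  destruct k; simpl. apply Rabs_mult.
  destruct a as [x y], b as [u v]; unfold Cabs, Cmul; simpl.
  rewrite <- sqrt_mult by nra. f_equal. ring.
Qed.

Lemma sabs_ofR r : sabs k (sofR k r) = Rabs r.
Proof.
  destruct k; simpl; [reflexivity|].
  unfold Cabs, CofR; simpl. rewrite <- sqrt_Rsqr_abs. f_equal. unfold Rsqr. ring.
Qed.

Lemma sabs_opp (a : scal k) : sabs k (sopp k a) = sabs k a.
Proof.
  destruct k; simpl. apply Rabs_Ropp.
  destruct a as [x y]; unfold Cabs, Copp; simpl. f_equal. ring.
Qed.

Lemma sabs_eq0 (a : scal k) : sabs k a = 0 -> a = sofR k 0.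
Proof.
  destruct k; simpl; intros Ha.
  - destruct (Req_dec a 0) as [| Hne]; [assumption|]. exfalso. exact (Rabs_no_R0 a Hne Ha).
  - destruct a as [x y]; unfold Cabs, CofR in *; simpl in *.
    apply sqrt_eq_0 in Ha; [|nra].
    assert (x = 0) by nra. assert (y = 0) by nra. subst. reflexivity.
Qed.

(* Triangle inequality; in the complex case this is Cauchy-Schwarz in R^2. *)
Lemma sabs_triang (a b : scal k) : sabs k (sadd k a b) <= sabs k a + sabs k b.
Proof.
  destruct k; simpl. apply Rabs_triang.
  destruct a as [x y], b as [u v]; unfold Cabs, Cadd; cbn [Re Im].
  set (p := x ^ 2 + y ^ 2). set (q := u ^ 2 + v ^ 2).
  assert (Hp : 0 <= p) by (unfold p; nra). assert (Hq : 0 <= q) by (unfold q; nra).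
  assert (Hcs : x * u + y * v <= sqrt p * sqrt q).
  { rewrite <- sqrt_mult by auto.
    destruct (Rle_or_lt (x * u + y * v) 0) as [Hneg | Hpos].
    - pose proof (sqrt_pos (p * q)). lra.
    - rewrite <- (sqrt_pow2 (x * u + y * v)) by lra. apply sqrt_le_1_alt.
      unfold p, q. pose proof (pow2_ge_0 (x * v - y * u)). nra. }
  apply Rsqr_incr_0_var; [| pose proof (sqrt_pos p); pose proof (sqrt_pos q); lra].
  unfold Rsqr. rewrite (sqrt_sqrt ((x + u) ^ 2 + (y + v) ^ 2))
    by (pose proof (pow2_ge_0 (x + u)); pose proof (pow2_ge_0 (y + v)); lra).
  replace ((sqrt p + sqrt q) * (sqrt p + sqrt q))
    with (sqrt p * sqrt p + sqrt q * sqrt q + 2 * (sqrt p * sqrt q)) by ring.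
  rewrite !sqrt_sqrt by auto. unfold p, q in *. lra.
Qed.

Lemma sabs_sub_sym (a b : scal k) : sabs k (ssub k a b) = sabs k (ssub k b a).
Proof. rewrite <- sabs_opp. f_equal. ring. Qed.

Lemma sabs_sub_triang (a b c : scal k) :
  sabs k (ssub k a c) <= sabs k (ssub k a b) + sabs k (ssub k b c).
Proof. replace (ssub k a c) with (sadd k (ssub k a b) (ssub k b c)) by ring. apply sabs_triang. Qed.

Lemma sabs_reverse_triang (a b : scal k) : Rabs (sabs k a - sabs k b) <= sabs k (ssub k a b).
Proof.
  pose proof (sabs_triang (ssub k a b) b) as H1.
  pose proof (sabs_triang (ssub k b a) a) as H2.
  replace (sadd k (ssub k a b) b) with a in H1 by ring.
  replace (sadd k (ssub k b a) a) with b in H2 by ring.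
  rewrite sabs_sub_sym in H2. apply Rabs_le. lra.
Qed.

(* The scalar field is nontrivial, so C(K) contains two distinct constants. *)
Lemma sofR_1_neq_0 : sofR k 1 <> sofR k 0.
Proof. intros E. apply (f_equal (sabs k)) in E. rewrite !sabs_ofR, Rabs_R1, Rabs_R0 in E. lra. Qed.

(* Conjugation: [conj a * a = |a|^2], the scalar that norms a point evaluation. *)
Definition sconj : scal k -> scal k :=
  match k with RealCase => fun r => r | ComplexCase => fun z => mkC (Re z) (- Im z) end.

Lemma sabs_conj (a : scal k) : sabs k (sconj a) = sabs k a.
Proof.
  unfold sconj; destruct k; simpl; [reflexivity|].
  destruct a; unfold Cabs; simpl. f_equal. ring.
Qed.

Lemma conj_mul (a : scal k) : smul k (sconj a) a = sofR k (sabs k a * sabs k a).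
Proof.
  unfold sconj; destruct k; simpl.
  - rewrite <- Rabs_mult, Rabs_right by nra. reflexivity.
  - destruct a as [x y]; unfold Cmul, CofR, Cabs; simpl.
    rewrite sqrt_sqrt by nra. f_equal; ring.
Qed.

Definition radial (b g : R) (w : scal k) : scal k := smul k (sofR k (b / Rmax (sabs k w) g)) w.

Lemma sabs_radial b g w : sabs k (radial b g w) = Rabs (b / Rmax (sabs k w) g) * sabs k w.
Proof. unfold radial. rewrite sabs_mul, sabs_ofR. reflexivity. Qed.

Lemma radial_lipschitz b g (w w' : scal k) : 0 <= b -> 0 < g ->
  sabs k (ssub k (radial b g w) (radial b g w')) <= 2 * b / g * sabs k (ssub k w w').
Proof.
  intros Hb Hg. unfold radial.
  set (c := b / Rmax (sabs k w) g). set (c' := b / Rmax (sabs k w') g).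
  replace (ssub k (smul k (sofR k c) w) (smul k (sofR k c') w'))
    with (sadd k (smul k (sofR k c) (ssub k w w')) (smul k (sofR k (c - c')) w'))
    by (rewrite sofR_sub; ring).
  eapply Rle_trans; [apply sabs_triang|]. rewrite !sabs_mul, !sabs_ofR.
  apply radial_factor_lipschitz; auto using sabs_nonneg, sabs_reverse_triang.
Qed.

(** ** The space C(K) *)

Section FunctionSpace.
Variable K : Type.
Variable opens : (K -> Prop) -> Prop.
Hypothesis top : is_topology opens.
Hypothesis cpt : is_compact opens.
Hypothesis inh : inhabited K.

Local Notation cont := (inCK k K opens).
Local Notation nrm := (norm k K).
Local Notation sub := (fsub k K).

Lemma cont_const (a : scal k) : cont (fun _ => a).
Proof.
  intros x e He. exists (fun _ => True). split; [apply top | split; auto].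
  intros y _. replace (ssub k a a) with (sofR k 0) by ring.
  rewrite sabs_ofR, Rabs_R0. exact He.
Qed.

Lemma cont_lipschitz_comp (F : scal k -> scal k) L (f : fn k K) : 0 <= L ->
  (forall w w', sabs k (ssub k (F w) (F w')) <= L * sabs k (ssub k w w')) ->
  cont f -> cont (fun t => F (f t)).
Proof.
  intros HL HF Hf x e He.
  destruct (Hf x (e / (L + 1))) as [U [HU [Ux HUf]]]; [apply Rdiv_lt_0_compat; lra|].
  exists U. split; [exact HU | split; [exact Ux|]]. intros y Uy.
  specialize (HUf y Uy). pose proof (sabs_nonneg (ssub k (f y) (f x))).
  apply Rmult_lt_compat_l with (r := L + 1) in HUf; [|lra].
  replace ((L + 1) * (e / (L + 1))) with e in HUf by (field; lra).
  eapply Rle_lt_trans; [apply HF | nra].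
Qed.

Lemma cont_combine (op : scal k -> scal k -> scal k) (f g : fn k K) :
  (forall a b c d,
     sabs k (ssub k (op a b) (op c d)) <= sabs k (ssub k a c) + sabs k (ssub k b d)) ->
  cont f -> cont g -> cont (fun t => op (f t) (g t)).
Proof.
  intros Hop Hf Hg x e He.
  destruct (Hf x (e / 2)) as [U [HU [Ux HUf]]]; [lra|].
  destruct (Hg x (e / 2)) as [V [HV [Vx HVg]]]; [lra|].
  exists (fun z => U z /\ V z). split; [apply top; assumption | split; [auto|]].
  intros y [Uy Vy]. eapply Rle_lt_trans; [apply Hop|].
  specialize (HUf y Uy). specialize (HVg y Vy). lra.
Qed.

Lemma cont_add (f g : fn k K) : cont f -> cont g -> cont (fadd k K f g).
Proof.
  apply (cont_combine (sadd k)). intros a b c d.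
  replace (ssub k (sadd k a b) (sadd k c d)) with (sadd k (ssub k a c) (ssub k b d)) by ring.
  apply sabs_triang.
Qed.

Lemma cont_sub (f g : fn k K) : cont f -> cont g -> cont (sub f g).
Proof.
  apply (cont_combine (fun a b => ssub k a b)). intros a b c d.
  replace (ssub k (ssub k a b) (ssub k c d)) with (sadd k (ssub k a c) (sopp k (ssub k b d)))
    by ring.
  rewrite <- (sabs_opp (ssub k b d)). apply sabs_triang.
Qed.

Lemma cont_bounded (f : fn k K) : cont f -> exists B, forall t, sabs k (f t) <= B.
Proof.
  intros Hf.
  set (F := fun U : K -> Prop =>
              opens U /\ exists x, forall y, U y -> sabs k (ssub k (f y) (f x)) < 1).
  destruct (cpt F) as [l [Hl Hcover]].
  - intros U [HU _]. exact HU.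
  - intros x. destruct (Hf x 1 Rlt_0_1) as [U [HU [Ux HUf]]].
    exists U. split; [split; eauto | exact Ux].
  - assert (Hfinite : forall ls : list (K -> Prop), (forall U, In U ls -> F U) ->
              exists B, forall y, (exists U, In U ls /\ U y) -> sabs k (f y) <= B).
    { induction ls as [| U ls IH]; intros Hin.
      - exists 0. intros y [U [[] _]].
      - destruct IH as [B HB]; [intros V HV; apply Hin; right; exact HV|].
        destruct (Hin U (or_introl eq_refl)) as [_ [x Hx]].
        exists (Rmax B (sabs k (f x) + 1)). intros y [V [[<- | HV] Vy]].
        + specialize (Hx y Vy). pose proof (sabs_reverse_triang (f y) (f x)).
          pose proof (Rle_abs (sabs k (f y) - sabs k (f x))).
          eapply Rle_trans; [| apply Rmax_r]. lra.
        + eapply Rle_trans; [apply HB; eauto | apply Rmax_l]. }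
    destruct (Hfinite l Hl) as [B HB]. exists B. intros t. apply HB, Hcover.
Qed.

Lemma norm_lub (f : fn k K) : cont f ->
  (forall t, sabs k (f t) <= nrm f) /\
  (forall B, (forall t, sabs k (f t) <= B) -> nrm f <= B).
Proof.
  intros Hf. destruct inh as [t0]. destruct (cont_bounded f Hf) as [B HB].
  destruct (RSup_finite (fun r => exists t, r = sabs k (f t)) (sabs k (f t0)) B)
    as [m E]; [eauto | intros r [t ->]; apply HB |].
  destruct (RSup_Fin _ m E) as [Hub Hleast]. unfold norm. rewrite E. simpl. split.
  - intros t. apply Hub. eauto.
  - intros B' HB'. apply Hleast. intros r [t ->]. apply HB'.
Qed.

Lemma norm_ge (f : fn k K) t : cont f -> sabs k (f t) <= nrm f.
Proof. intros Hf. exact (proj1 (norm_lub f Hf) t). Qed.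

Lemma norm_le (f : fn k K) B : cont f -> (forall t, sabs k (f t) <= B) -> nrm f <= B.
Proof. intros Hf. exact (proj2 (norm_lub f Hf) B). Qed.

Lemma norm_nonneg (f : fn k K) : cont f -> 0 <= nrm f.
Proof.
  intros Hf. destruct inh as [t].
  pose proof (sabs_nonneg (f t)). pose proof (norm_ge f t Hf). lra.
Qed.

Lemma norm_attained (f : fn k K) t0 r :
  (forall t, sabs k (f t) <= r) -> sabs k (f t0) = r -> nrm f = r.
Proof.
  intros Hbound Ht0. unfold norm. rewrite (RSup_max _ r); [reflexivity | eauto |].
  intros x [t ->]. apply Hbound.
Qed.

Lemma norm_approx (f : fn k K) e : cont f -> 0 < e -> exists t, nrm f - e < sabs k (f t).
Proof.
  intros Hf He. apply NNPP. intros Hnone.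
  assert (nrm f <= nrm f - e); [|lra].
  apply norm_le; [exact Hf|]. intros t. apply Rnot_lt_le. intros Hlt. apply Hnone. eauto.
Qed.

Lemma norm_sub_self (x : fn k K) : nrm (sub x x) = 0.
Proof.
  destruct inh as [t0]. apply (norm_attained _ t0); unfold fsub; intros;
    replace (ssub k (x _) (x _)) with (sofR k 0) by ring; rewrite sabs_ofR, Rabs_R0; lra.
Qed.

Lemma norm_sub_pos (x y : fn k K) : cont x -> cont y -> x <> y -> 0 < nrm (sub x y).
Proof.
  intros Hx Hy Hne. destruct (classic (exists t, x t <> y t)) as [[t Ht] | Hall].
  - pose proof (norm_ge (sub x y) t (cont_sub x y Hx Hy)) as Hge.
    change (sub x y t) with (ssub k (x t) (y t)) in Hge.
    destruct (Req_dec (sabs k (ssub k (x t) (y t))) 0) as [E | E].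
    + exfalso. apply Ht. apply sabs_eq0 in E.
      replace (x t) with (sadd k (ssub k (x t) (y t)) (y t)) by ring. rewrite E. ring.
    + pose proof (sabs_nonneg (ssub k (x t) (y t))). lra.
  - exfalso. apply Hne. apply functional_extensionality. intros t.
    apply NNPP. intros Hxy. apply Hall. eauto.
Qed.

Definition peaks_at (z : fn k K) (t : K) : Prop := sabs k (z t) = nrm z.

(* With
   [g = |z t0|] and [b = (||z|| + g)/2], take [d1 = radial b g o z] and [d2 = z - d1];
   then [||d1|| = b] and [||d2|| = b - g], both attained at [t0]. *)
Lemma peak_split (z : fn k K) t0 : cont z -> 0 < sabs k (z t0) ->
  exists d1 d2, cont d1 /\ cont d2 /\ (forall t, z t = sadd k (d1 t) (d2 t)) /\
    peaks_at d1 t0 /\ peaks_at d2 t0 /\ nrm d1 + nrm d2 = nrm z.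
Proof.
  intros Hz Hg.
  set (M := nrm z). set (g := sabs k (z t0)). set (c := fun w => (M + g) / 2 / Rmax (sabs k w) g).
  assert (HzM : forall t, 0 <= sabs k (z t) <= M)
    by (intros t; split; [apply sabs_nonneg | apply norm_ge, Hz]).
  assert (HgM : 0 < g <= M) by (split; [exact Hg | apply HzM]).
  set (d1 := fun t => radial ((M + g) / 2) g (z t)).
  set (d2 := fun t => ssub k (z t) (d1 t)).
  assert (Hd1 : cont d1).
  { apply (cont_lipschitz_comp (radial ((M + g) / 2) g) (2 * ((M + g) / 2) / g));
      [apply Rdiv_nonneg; lra | | exact Hz].
    intros w w'. apply radial_lipschitz; lra. }
  assert (Hd2 : cont d2) by exact (cont_sub z d1 Hz Hd1).
  assert (Habs1 : forall t, sabs k (d1 t) = Rabs (c (z t)) * sabs k (z t))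
    by (intros t; apply sabs_radial).
  assert (Habs2 : forall t, sabs k (d2 t) = Rabs (1 - c (z t)) * sabs k (z t)).
  { intros t. unfold d2, d1, radial. fold (c (z t)).
    replace (ssub k (z t) (smul k (sofR k (c (z t))) (z t)))
      with (smul k (sofR k (1 - c (z t))) (z t)) by (rewrite sofR_sub; ring).
    rewrite sabs_mul, sabs_ofR. reflexivity. }
  destruct (radial_factor_at_peak g M HgM) as [Hpeak1 Hpeak2].
  assert (Hn1 : nrm d1 = (M + g) / 2).
  { apply (norm_attained _ t0); [| rewrite Habs1; exact Hpeak1].
    intros t. rewrite Habs1. apply (radial_factor_bounds g M); auto. }
  assert (Hn2 : nrm d2 = (M - g) / 2).
  { apply (norm_attained _ t0); [| rewrite Habs2; exact Hpeak2].
    intros t. rewrite Habs2. apply (radial_factor_bounds g M); auto. }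
  exists d1, d2. repeat split; auto.
  - intros t. unfold d2. ring.
  - unfold peaks_at. rewrite Hn1, Habs1. exact Hpeak1.
  - unfold peaks_at. rewrite Hn2, Habs2. exact Hpeak2.
  - rewrite Hn1, Hn2. field.
Qed.

Definition eval_at (z : fn k K) (t1 : K) : fn k K -> scal k :=
  fun f => smul k (sconj (z t1)) (f t1).

Lemma sabs_eval_at (z f : fn k K) t1 : sabs k (eval_at z t1 f) = sabs k (z t1) * sabs k (f t1).
Proof. unfold eval_at. rewrite sabs_mul, sabs_conj. reflexivity. Qed.

Lemma eval_at_in_D (z : fn k K) t1 : cont z -> peaks_at z t1 -> Dset k K opens z (eval_at z t1).
Proof.
  intros Hz Hpeak. unfold peaks_at in Hpeak.
  assert (Hbound : forall f, cont f -> sabs k (eval_at z t1 f) <= nrm z * nrm f).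
  { intros f Hf. rewrite sabs_eval_at, Hpeak.
    apply Rmult_le_compat_l; [apply norm_nonneg, Hz | apply norm_ge, Hf]. }
  assert (Hdual : dual_norm k K opens (eval_at z t1) = nrm z).
  { unfold dual_norm. rewrite (RSup_max _ (nrm z)); [reflexivity | |].
    - exists (fun _ => sofR k 1). split; [apply cont_const|]. split.
      + right. apply (norm_attained _ t1); intros; rewrite sabs_ofR, Rabs_R1; lra.
      + rewrite sabs_eval_at, Hpeak, sabs_ofR, Rabs_R1. ring.
    - intros r [f [Hf [Hf1 ->]]]. pose proof (Hbound f Hf). pose proof (norm_nonneg z Hz).
      nra. }
  repeat split.
  - intros f h _ _. unfold eval_at, fadd. ring.
  - intros a f _. unfold eval_at, fscale. ring.
  - exists (nrm z). exact Hbound.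
  - rewrite Hdual. unfold eval_at. rewrite conj_mul, Hpeak. reflexivity.
  - rewrite Hdual. ring.
Qed.

Definition peak_witness (T : fn k K -> fn k K) th u v t1 : Prop :=
  cont u /\ cont v /\ peaks_at (sub u v) t1 /\
  th * nrm (sub u v) < sabs k (sub (T u) (T v) t1).

(* For an arbitrary map [T]: if [|(Tx - Ty)(t0)| > th ||x - y||] and [x t0 <> y t0],
   split [x - y = d1 + d2] at [t0] (peak_split) and set [q = y + d1]; the triangle
   inequality at [t0] forces one of the pairs [(q, y)], [(x, q)] to be a peak witness. *)
Lemma peak_transfer (T : fn k K -> fn k K) th x y t0 : cont x -> cont y ->
  0 < sabs k (sub x y t0) -> th * nrm (sub x y) < sabs k (sub (T x) (T y) t0) ->
  exists u v, peak_witness T th u v t0.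
Proof.
  intros Hx Hy Hz Hgap.
  destruct (peak_split (sub x y) t0 (cont_sub x y Hx Hy) Hz)
    as [d1 [d2 [Hd1 [Hd2 [Hsum [Hp1 [Hp2 Hnorms]]]]]]].
  set (q := fadd k K y d1).
  assert (Hq : cont q) by exact (cont_add y d1 Hy Hd1).
  assert (Eqy : sub q y = d1).
  { apply functional_extensionality. intros t. unfold fsub, q, fadd. ring. }
  assert (Exq : sub x q = d2).
  { apply functional_extensionality. intros t. specialize (Hsum t).
    unfold fsub, q, fadd in *.
    transitivity (ssub k (ssub k (x t) (y t)) (d1 t)); [ring | rewrite Hsum; ring]. }
  pose proof (sabs_sub_triang (T x t0) (T q t0) (T y t0)) as Htri.
  rewrite <- Hnorms, Rmult_plus_distr_l in Hgap.
  destruct (Rlt_or_le (th * nrm d1) (sabs k (ssub k (T q t0) (T y t0)))) as [Hqy | Hqy].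
  - exists q, y. unfold peak_witness. rewrite Eqy. auto.
  - exists x, q. unfold peak_witness. rewrite Exq. repeat split; auto.
    change (sub (T x) (T q) t0) with (ssub k (T x t0) (T q t0)).
    change (sub (T x) (T y) t0) with (ssub k (T x t0) (T y t0)) in Hgap. lra.
Qed.

Section LipschitzMap.
Variable T : fn k K -> fn k K.
Hypothesis T_Lip0 : in_Lip0 k K opens T.
Hypothesis T_norm : lip_norm k K opens T = Fin 1.

Let T_cont f : cont f -> cont (T f).
Proof. apply T_Lip0. Qed.

Let lip_quotients (r : R) : Prop := exists x y, cont x /\ cont y /\ x <> y /\
  r = nrm (sub (T x) (T y)) / nrm (sub x y).

Lemma lip_contraction x y : cont x -> cont y -> nrm (sub (T x) (T y)) <= nrm (sub x y).
Proof.
  intros Hx Hy. destruct (classic (x = y)) as [<- | Hne].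
  - rewrite !norm_sub_self. lra.
  - pose proof (norm_sub_pos x y Hx Hy Hne) as Hpos.
    assert (Hq : nrm (sub (T x) (T y)) / nrm (sub x y) <= 1).
    { apply (proj1 (RSup_Fin lip_quotients 1 T_norm)). exists x, y. auto. }
    apply Rmult_le_compat_r with (r := nrm (sub x y)) in Hq; [|lra].
    unfold Rdiv in Hq. rewrite Rmult_assoc, Rinv_l, Rmult_1_r, Rmult_1_l in Hq; lra.
Qed.

Lemma lip_almost_attained th : th < 1 -> exists x y, cont x /\ cont y /\ x <> y /\
  th * nrm (sub x y) < nrm (sub (T x) (T y)).
Proof.
  intros Hth. destruct (RSup_approx lip_quotients 1 th T_norm Hth)
    as [r [[x [y [Hx [Hy [Hne ->]]]]] Hr]].
  exists x, y. repeat split; auto.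
  pose proof (norm_sub_pos x y Hx Hy Hne) as Hpos.
  apply Rmult_lt_compat_r with (r := nrm (sub x y)) in Hr; [|lra].
  unfold Rdiv in Hr. rewrite Rmult_assoc, Rinv_l, Rmult_1_r in Hr; lra.
Qed.

(* Leaving a zero of [x - y]: adding a constant [eta] to [x] makes [x - y] equal to [eta]
   at [t0], enlarges [||x - y||] by at most [eta] and, [T] being a contraction, moves
   [(Tx - Ty)(t0)] by at most [eta]. *)
Lemma shift_by_constant x y t0 eta : cont x -> cont y -> 0 < eta -> sub x y t0 = sofR k 0 ->
  exists x', cont x' /\ sabs k (sub x' y t0) = eta /\
    nrm (sub x' y) <= nrm (sub x y) + eta /\
    sabs k (sub (T x) (T y) t0) - eta <= sabs k (sub (T x') (T y) t0).
Proof.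
  intros Hx Hy Heta Hzero.
  set (x' := fadd k K x (fun _ => sofR k eta)).
  assert (Hx' : cont x') by exact (cont_add _ _ Hx (cont_const _)).
  assert (Hshift : forall t, sub x' y t = sadd k (sub x y t) (sofR k eta))
    by (intros t; unfold fsub, x', fadd; ring).
  assert (Heta_abs : sabs k (sofR k eta) = eta) by (rewrite sabs_ofR; apply Rabs_right; lra).
  assert (Hdist : nrm (sub x' x) = eta).
  { apply (norm_attained _ t0); unfold fsub, x', fadd; intros;
      replace (ssub k (sadd k (x _) (sofR k eta)) (x _)) with (sofR k eta) by ring; lra. }
  exists x'. repeat split; auto.
  - rewrite Hshift, Hzero. replace (sadd k (sofR k 0) (sofR k eta)) with (sofR k eta) by ring.
    exact Heta_abs.
  - apply norm_le; [exact (cont_sub _ _ Hx' Hy)|]. intros t. rewrite Hshift.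
    eapply Rle_trans; [apply sabs_triang|]. rewrite Heta_abs.
    pose proof (norm_ge (sub x y) t (cont_sub _ _ Hx Hy)). lra.
  - assert (Hmove : sabs k (ssub k (T x t0) (T x' t0)) <= eta).
    { rewrite sabs_sub_sym, <- Hdist.
      apply (Rle_trans _ (nrm (sub (T x') (T x))));
        [apply (norm_ge (sub (T x') (T x)) t0) | apply lip_contraction]; auto using cont_sub. }
    pose proof (sabs_sub_triang (T x t0) (T x' t0) (T y t0)). unfold fsub. lra.
Qed.

(* Take [x, y] almost attaining [||T||_L] and [t0] almost attaining [||Tx - Ty||]; if
   [x t0 = y t0], first shift [x] by a small constant, then apply peak_transfer. *)
Lemma peak_witness_exists th : 0 <= th < 1 -> exists u v t1, peak_witness T th u v t1.
Proof.
  intros Hth. set (e := 1 - th).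
  destruct (lip_almost_attained (1 - e / 2)) as [x [y [Hx [Hy [Hne Hgap]]]]]; [unfold e; lra|].
  pose proof (norm_sub_pos x y Hx Hy Hne) as HN. set (N := nrm (sub x y)) in *.
  destruct (norm_approx (sub (T x) (T y)) (nrm (sub (T x) (T y)) - (1 - e / 2) * N))
    as [t0 Ht0]; [apply cont_sub; auto | lra |].
  assert (Hgap0 : (1 - e / 2) * N < sabs k (sub (T x) (T y) t0)) by lra.
  enough (Hwit : exists u v, peak_witness T th u v t0)
    by (destruct Hwit as [u [v Hw]]; exists u, v, t0; exact Hw).
  destruct (Req_dec (sabs k (sub x y t0)) 0) as [Hzero | Hnonzero].
  - set (eta := e * N / 4).
    assert (Heta : 0 < eta) by (unfold eta, e; nra).
    destruct (shift_by_constant x y t0 eta Hx Hy Heta (sabs_eq0 _ Hzero))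
      as [x' [Hx' [Hat [Hnorm Hmove]]]].
    fold N in Hnorm.
    apply (peak_transfer T th x' y t0 Hx' Hy); [lra|].
    apply (Rle_lt_trans _ (th * (N + eta))); [apply Rmult_le_compat_l; lra|].
    assert (th * (N + eta) < (1 - e / 2) * N - eta) by (unfold eta, e in *; nra). lra.
  - apply (peak_transfer T th x y t0 Hx Hy).
    + pose proof (sabs_nonneg (sub x y t0)). lra.
    + fold N. assert (0 < e * N) by (apply Rmult_lt_0_compat; unfold e; lra).
      unfold e in *. lra.
Qed.

(* Hence [omega(T) >= 1]: a peak witness [(u, v, t1)] at level [th] together with
   the functional [eval_at (u - v) t1] in [D(u - v)] gives a quotient larger than [th]. *)
Lemma omega_ge_one : Rbar_le (Fin 1) (omega k K opens T).
Proof.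
  apply RSup_ge. intros th Hth.
  destruct (peak_witness_exists (Rmax 0 th)) as [u [v [t1 [Hu [Hv [Hpeak Hgap]]]]]];
    [split; [apply Rmax_l | apply Rmax_lub_lt; lra]|].
  pose proof (Rmax_r 0 th) as Hth1.
  assert (Hne : u <> v).
  { intros <-. rewrite norm_sub_self in Hgap. unfold fsub in Hgap.
    replace (ssub k (T u t1) (T u t1)) with (sofR k 0) in Hgap by ring.
    rewrite sabs_ofR, Rabs_R0 in Hgap. lra. }
  pose proof (norm_sub_pos u v Hu Hv Hne) as HN.
  exists (sabs k (eval_at (sub u v) t1 (sub (T u) (T v))) / nrm (sub u v) ^ 2). split.
  - exists u, v, (eval_at (sub u v) t1).
    do 3 (split; [assumption|]). split; [|reflexivity].
    apply eval_at_in_D; [apply cont_sub |]; assumption.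
  - rewrite sabs_eval_at, Hpeak.
    replace (nrm (sub u v) * sabs k (sub (T u) (T v) t1) / nrm (sub u v) ^ 2)
      with (sabs k (sub (T u) (T v) t1) / nrm (sub u v)) by (field; lra).
    apply (Rle_lt_trans _ (Rmax 0 th)); [exact Hth1|].
    apply Rmult_lt_reg_r with (nrm (sub u v)); [exact HN|].
    unfold Rdiv. rewrite Rmult_assoc, Rinv_l, Rmult_1_r; lra.
Qed.

End LipschitzMap.

Lemma id_in_Lip0 : in_Lip0 k K opens (fun f => f).
Proof. split; [auto | split; [reflexivity | exists 1; intros; lra]]. Qed.

Lemma id_lip_norm : lip_norm k K opens (fun f => f) = Fin 1.
Proof.
  assert (Hquot : forall x y, cont x -> cont y -> x <> y -> nrm (sub x y) / nrm (sub x y) = 1)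
    by (intros x y Hx Hy Hne; pose proof (norm_sub_pos x y Hx Hy Hne); field; lra).
  apply RSup_max.
  - destruct inh as [t].
    assert (Hne : (fun _ : K => sofR k 1) <> (fun _ => sofR k 0))
      by (intros E; apply sofR_1_neq_0, (equal_f E t)).
    exists (fun _ => sofR k 1), (fun _ => sofR k 0).
    repeat split; try apply cont_const; auto. symmetry. apply Hquot; auto using cont_const.
  - intros r [x [y [Hx [Hy [Hne ->]]]]]. rewrite Hquot by auto. lra.
Qed.

(* ... with [omega(Id) <= 1]: for [phi] in [D(z)], [phi z = ||z||^2]. *)
Lemma omega_id_le_one : Rbar_le (omega k K opens (fun f => f)) (Fin 1).
Proof.
  apply RSup_le. intros r [x [y [phi [Hx [Hy [Hne [[_ [Hval Hnorm]] ->]]]]]]].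
  pose proof (norm_sub_pos x y Hx Hy Hne).
  rewrite Hval, Hnorm, sabs_ofR, Rabs_right by (apply Rle_ge, pow2_ge_0).
  right. field. lra.
Qed.

End FunctionSpace.
End Field.

Theorem proposition2p8 (k : field_kind) (K : Type) (opens : (K -> Prop) -> Prop) :
  is_topology opens -> is_compact opens -> is_hausdorff opens -> inhabited K ->
  nL k K opens = Fin 1.
Proof.
  intros top cpt _ inh.
  assert (Hid : omega k K opens (fun f => f) = Fin 1).
  { apply Rbar_le_antisym; [apply omega_id_le_one | apply omega_ge_one];
      auto using id_in_Lip0, id_lip_norm. }
  unfold nL. apply Inf_eq. split.
  - intros w [T [HT [HL ->]]]. apply omega_ge_one; assumption.
  - intros u Hu. rewrite <- Hid. apply Hu.
    exists (fun f => f). auto using id_in_Lip0, id_lip_norm.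
Qed.
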